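(* Let $I$ be a nonzero ideal of $\mathbb{Z}[\zeta_8]$. Then there exists a generator $\alpha'$ of $I$ (i.e. $I=(\alpha')$) which is a shortest nonzero vector of $I$ under the canonical embedding, i.e. $\|\Sigma_{\mathbb{Q}(\zeta_8)}(\alpha')\|\le\|\Sigma_{\mathbb{Q}(\zeta_8)}(\gamma)\|$ for every nonzero $\gamma\in I$.
   Context: $\zeta_8=e^{2\pi i/8}$. For a number field $\mathbb{K}$ with complex embeddings $\varphi_1,\dots,\varphi_t$ (all of them), the canonical embedding is $\Sigma_{\mathbb{K}}(x)=(\varphi_1(x),\dots,\varphi_t(x))$ with $\|\Sigma_{\mathbb{K}}(x)\|^2=\sum_j|\varphi_j(x)|^2$. *)

(* Z[zeta_8] modelled concretely in the power basis
   1, z, z^2, z^3 with z^4 = -1; complex embeddings go into algC. *)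
From mathcomp Require Import all_boot all_order all_algebra all_field.
Set Implicit Arguments. Unset Strict Implicit. Unset Printing Implicit Defensive.
Import Order.TTheory GRing.Theory Num.Theory.
Local Open Scope ring_scope.

(* an element a0 + a1 z + a2 z^2 + a3 z^3 of Z[zeta_8] *)
Definition Z8 : Type := (int * int * int * int)%type.

Definition z8zero : Z8 := (0, 0, 0, 0).

Definition z8add (x y : Z8) : Z8 :=
  let: (a0, a1, a2, a3) := x in let: (b0, b1, b2, b3) := y in
  (a0 + b0, a1 + b1, a2 + b2, a3 + b3).

(* multiplication modulo z^4 = -1 *)
Definition z8mul (x y : Z8) : Z8 :=
  let: (a0, a1, a2, a3) := x in let: (b0, b1, b2, b3) := y in
  (a0 * b0 - a1 * b3 - a2 * b2 - a3 * b1,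
   a0 * b1 + a1 * b0 - a2 * b3 - a3 * b2,
   a0 * b2 + a1 * b1 + a2 * b0 - a3 * b3,
   a0 * b3 + a1 * b2 + a2 * b1 + a3 * b0).

Definition is_ideal (I : Z8 -> Prop) : Prop :=
  [/\ I z8zero,
      (forall x y, I x -> I y -> I (z8add x y)) &
      (forall r x, I x -> I (z8mul r x))].

Definition generates (a : Z8) (I : Z8 -> Prop) : Prop :=
  forall x, I x <-> exists r, x = z8mul r a.

Definition zeta8 : algC := (1 + 'i) / sqrtC 2.

(* the complex embedding sending zeta_8 to zeta_8^k (k odd) *)
Definition z8emb (k : nat) (x : Z8) : algC :=
  let: (a0, a1, a2, a3) := x in
  a0%:~R + a1%:~R * zeta8 ^+ k + a2%:~R * zeta8 ^+ (2 * k)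
    + a3%:~R * zeta8 ^+ (3 * k).

Definition canon_normsq (x : Z8) : algC :=
  \sum_(k <- [:: 1; 3; 5; 7]%N) `|z8emb k x| ^+ 2.

Definition canon_norm (x : Z8) : algC := sqrtC (canon_normsq x).

(* Write [x * x^* = P x + Q x * sqrt 2] ([rnorm_re], [rnorm_sqrt2]); then
   [||Sigma x||^2 = 4 P x] and the field norm is [N x = P x ^ 2 - 2 Q x ^ 2 > 0].
   Z[zeta8] is norm-Euclidean (round [x * adj g / N g] coordinatewise), so every
   nonzero ideal is principal.  Multiplying a generator by the unit [1 + sqrt 2]
   or its inverse turns [P] into [3 P +- 4 Q], so a generator [a] with least [P]
   satisfies [2 |Q a| <= P a].  For [r <> 0], [N r > 0] gives [|Q r| < P r], hence
   [P (r a) = P r P a + 2 Q r Q a >= (P r - |Q r|) P a >= P a]. *)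

From mathcomp Require Import all_boot all_order all_algebra all_field.
From mathcomp Require Import ring lra zify.
From Stdlib Require Import Classical_Prop.
Import Order.TTheory GRing.Theory Num.Theory.
Local Open Scope ring_scope.

Definition z8one : Z8 := (1, 0, 0, 0).

Definition z8opp (x : Z8) : Z8 :=
  let: (a0, a1, a2, a3) := x in (- a0, - a1, - a2, - a3).

Ltac z8_coords :=
  repeat match goal with x : Z8 |- _ => revert x end;
  repeat match goal with |- forall _ : Z8, _ => case=> [[[? ?] ?] ?] end.

Ltac z8_ring := z8_coords; rewrite /=; (congr (_, _, _, _); ring) || ring.

Lemma z8mulA x y z : z8mul x (z8mul y z) = z8mul (z8mul x y) z.
Proof. by z8_ring. Qed.

Lemma z8mul1 x : z8mul z8one x = x.
Proof. by z8_ring. Qed.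

Lemma z8mul0 x : z8mul z8zero x = z8zero.
Proof. by z8_ring. Qed.

Lemma z8mulDl x y z : z8mul (z8add x y) z = z8add (z8mul x z) (z8mul y z).
Proof. by z8_ring. Qed.

Lemma z8add_eq0 x y : z8add x y = z8zero -> x = z8opp y.
Proof. z8_coords; rewrite /z8zero /= => -[e0 e1 e2 e3]; congr (_, _, _, _); lia. Qed.

Lemma z8mulN x y : z8mul (z8opp x) y = z8opp (z8mul x y).
Proof. by z8_ring. Qed.

Lemma sqrt2_irrational (p q : int) : p ^+ 2 = 2 * q ^+ 2 -> p = 0.
Proof.
move=> /(congr1 absz); rewrite abszM !abszX [absz 2]/= => e.
apply/eqP; rewrite -absz_eq0; move: `|p|%N `|q|%N e => m n e.
have [n0|n_gt0] := posnP n.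
  by move: e; rewrite n0 muln0 => /eqP; rewrite expn_eq0 => /andP[].
have : (0 < m ^ 2)%N by rewrite e muln_gt0 expn_gt0 n_gt0.
rewrite expn_gt0 orbF => m_gt0.
(* the 2-adic valuation of [m ^ 2] is even, that of [2 * n ^ 2] is odd *)
have /(congr1 odd) := congr1 (logn 2) e.
by rewrite lognM ?expn_gt0 ?n_gt0 // !lognX (pfactorK 1) // oddD !oddM.
Qed.

Definition rnorm_re (x : Z8) : int :=
  let: (a0, a1, a2, a3) := x in a0 ^+ 2 + a1 ^+ 2 + a2 ^+ 2 + a3 ^+ 2.

Definition rnorm_sqrt2 (x : Z8) : int :=
  let: (a0, a1, a2, a3) := x in a0 * a1 + a1 * a2 + a2 * a3 - a3 * a0.

Definition z8norm (x : Z8) : int := rnorm_re x ^+ 2 - 2 * rnorm_sqrt2 x ^+ 2.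

Lemma rnorm_reM x y :
  rnorm_re (z8mul x y) = rnorm_re x * rnorm_re y + 2 * (rnorm_sqrt2 x * rnorm_sqrt2 y).
Proof. by z8_ring. Qed.

Lemma rnorm_sqrt2M x y :
  rnorm_sqrt2 (z8mul x y) = rnorm_re x * rnorm_sqrt2 y + rnorm_sqrt2 x * rnorm_re y.
Proof. by z8_ring. Qed.

Lemma z8normM x y : z8norm (z8mul x y) = z8norm x * z8norm y.
Proof. rewrite /z8norm rnorm_reM rnorm_sqrt2M; ring. Qed.

Lemma rnorm_re_ge0 x : 0 <= rnorm_re x.
Proof. by z8_coords; rewrite /= !addr_ge0 ?sqr_ge0. Qed.

Lemma rnorm_re_eq0 x : rnorm_re x = 0 -> x = z8zero.
Proof. z8_coords; rewrite /z8zero /= => e; congr (_, _, _, _); nia. Qed.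

Lemma z8norm_sos x : z8norm x = let: (a0, a1, a2, a3) := x in
  (a0 ^+ 2 - a2 ^+ 2 + 2 * a1 * a3) ^+ 2 + (2 * a0 * a2 - a1 ^+ 2 + a3 ^+ 2) ^+ 2.
Proof. by rewrite /z8norm; z8_ring. Qed.

Lemma z8norm_ge0 x : 0 <= z8norm x.
Proof. by rewrite z8norm_sos; case: x => [[[? ?] ?] ?]; rewrite addr_ge0 ?sqr_ge0. Qed.

Lemma z8norm_gt0 {x} : x <> z8zero -> 0 < z8norm x.
Proof.
move=> x_neq0; rewrite lt0r z8norm_ge0 andbT; apply/eqP => /eqP.
rewrite subr_eq0 => /eqP/sqrt2_irrational/rnorm_re_eq0; exact: x_neq0.
Qed.

Lemma rnorm_sqrt2_lt x : x <> z8zero -> `|rnorm_sqrt2 x| < rnorm_re x.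
Proof.
move=> /z8norm_gt0; rewrite /z8norm => N_gt0.
have := rnorm_re_ge0 x; have := normr_ge0 (rnorm_sqrt2 x).
nia.
Qed.

(* [z8sigmak] is the automorphism [zeta8 |-> zeta8 ^+ k]. *)
Definition z8sigma3 (x : Z8) : Z8 := let: (a0, a1, a2, a3) := x in (a0, a3, - a2, a1).
Definition z8sigma5 (x : Z8) : Z8 := let: (a0, a1, a2, a3) := x in (a0, - a1, a2, - a3).
Definition z8sigma7 (x : Z8) : Z8 := let: (a0, a1, a2, a3) := x in (a0, - a3, - a2, - a1).

Definition z8adj (x : Z8) : Z8 := z8mul (z8sigma3 x) (z8mul (z8sigma5 x) (z8sigma7 x)).

Lemma z8mul_adj x : z8mul x (z8adj x) = (z8norm x, 0, 0, 0).
Proof. by rewrite /z8adj /z8norm; z8_ring. Qed.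

Lemma exists_round_div (w : int) {n : int} : 0 < n -> exists q, - n <= 2 * (w - n * q) < n.
Proof.
move=> n_gt0; exists ((2 * w + n) %/ (2 * n))%Z.
have n2_gt0 : 0 < 2 * n by lia.
have := divz_eq (2 * w + n) (2 * n).
have := modz_ge0 (2 * w + n) (lt0r_neq0 n2_gt0).
have := ltz_pmod (2 * w + n) n2_gt0.
move: ((2 * w + n) %/ (2 * n))%Z ((2 * w + n) %% (2 * n))%Z => q r.
by move=> *; apply/andP; split; nia.
Qed.

Lemma sqr_le_half_box {n r : int} : - n <= 2 * r < n -> 4 * r ^+ 2 <= n ^+ 2.
Proof. by case/andP=> *; nia. Qed.

Lemma sqr_eq_half_box {n r : int} : - n <= 2 * r < n -> 4 * r ^+ 2 = n ^+ 2 -> 2 * r = - n.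
Proof.
case/andP=> _ r_lt e.
have : (2 * r + n) * (2 * r - n) = 4 * r ^+ 2 - n ^+ 2 by ring.
rewrite e subrr => /eqP; rewrite mulf_eq0 subr_eq0 addr_eq0 => /orP[/eqP //|/eqP r_eq].
by rewrite r_eq ltxx in r_lt.
Qed.

Lemma z8norm_lt_half_box {n r0 r1 r2 r3 : int} : 0 < n ->
  - n <= 2 * r0 < n -> - n <= 2 * r1 < n -> - n <= 2 * r2 < n -> - n <= 2 * r3 < n ->
  z8norm (r0, r1, r2, r3) < n ^+ 4.
Proof.
move=> n_gt0 h0 h1 h2 h3; rewrite /z8norm.
have s0 := sqr_le_half_box h0; have s1 := sqr_le_half_box h1.
have s2 := sqr_le_half_box h2; have s3 := sqr_le_half_box h3.
have Q2_ge0 := sqr_ge0 (rnorm_sqrt2 (r0, r1, r2, r3)).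
have [P_lt|P_ge] := ltrP (rnorm_re (r0, r1, r2, r3)) (n ^+ 2).
  have : rnorm_re (r0, r1, r2, r3) ^+ 2 < (n ^+ 2) ^+ 2 by rewrite ltrXn2r ?rnorm_re_ge0.
  rewrite -exprM; lia.
(* the only corner of the box where [rnorm_re] reaches [n ^+ 2] has [rnorm_sqrt2 <> 0] *)
have P_eq : rnorm_re (r0, r1, r2, r3) = n ^+ 2 by move: P_ge; rewrite /=; lia.
have [f0 f1 f2 f3] : [/\ 2 * r0 = - n, 2 * r1 = - n, 2 * r2 = - n & 2 * r3 = - n].
  by move: P_eq; rewrite /= => P_eq; split; apply: sqr_eq_half_box; lia.
have Q_eq : 4 * rnorm_sqrt2 (r0, r1, r2, r3) = 2 * n ^+ 2.
  transitivity ((2 * r0) * (2 * r1) + (2 * r1) * (2 * r2) + (2 * r2) * (2 * r3)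
                - (2 * r3) * (2 * r0)); first by rewrite /=; ring.
  by rewrite f0 f1 f2 f3; ring.
have : 0 < rnorm_sqrt2 (r0, r1, r2, r3) ^+ 2.
  by rewrite exprn_gt0 //; move: Q_eq (exprn_gt0 2 n_gt0); lia.
rewrite P_eq -exprM; lia.
Qed.

Lemma z8norm_int (n : int) : z8norm (n, 0, 0, 0) = n ^+ 4.
Proof. by rewrite /z8norm /=; ring. Qed.

Lemma z8norm_euclidean x {g} : g <> z8zero ->
  exists q, z8norm (z8add x (z8mul q g)) < z8norm g.
Proof.
move=> g_neq0; have n_gt0 := z8norm_gt0 g_neq0; set n := z8norm g in n_gt0 *.
(* round [x / g = x * z8adj g / n] coordinatewise *)
case E : (z8mul x (z8adj g)) => [[[w0 w1] w2] w3].
have [q0 h0] := exists_round_div w0 n_gt0; have [q1 h1] := exists_round_div w1 n_gt0.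
have [q2 h2] := exists_round_div w2 n_gt0; have [q3 h3] := exists_round_div w3 n_gt0.
exists (- q0, - q1, - q2, - q3); set d := z8add x _.
have dE : z8mul d (z8adj g) = (w0 - n * q0, w1 - n * q1, w2 - n * q2, w3 - n * q3).
  by rewrite z8mulDl -z8mulA z8mul_adj E -/n /=; congr (_, _, _, _); ring.
have := z8norm_lt_half_box n_gt0 h0 h1 h2 h3; rewrite -dE z8normM.
have adjE : n * z8norm (z8adj g) = n ^+ 4 by rewrite -z8normM z8mul_adj z8norm_int.
have := z8norm_ge0 d; have := z8norm_ge0 (z8adj g); nia.
Qed.

Lemma exists_min_measure {T : Type} {P : T -> Prop} (m : T -> nat) :
  (exists x, P x) -> exists x, P x /\ forall y, P y -> (m x <= m y)%N.
Proof.
move=> [x Px]; move: {2}(m x) (erefl (m x)) => k.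
elim/ltn_ind: k x Px => k IH x Px mx; subst k.
have [[y [Py lt_yx]]|no_smaller] := classic (exists y, P y /\ (m y < m x)%N).
  exact: IH lt_yx y Py erefl.
exists x; split=> // y Py; rewrite leqNgt; apply/negP => lt_yx.
by apply: no_smaller; exists y.
Qed.

Lemma ideal_principal {I} : is_ideal I -> (exists x, I x /\ x <> z8zero) ->
  exists g, generates g I.
Proof.
move=> [_ ID IM] /(exists_min_measure (fun x => `|z8norm x|%N)) [g [[Ig g_neq0] g_min]].
exists g => x; split=> [Ix|[r ->]]; last exact: IM.
have [q lt_g] := z8norm_euclidean x g_neq0.
have Ir : I (z8add x (z8mul q g)) by apply: ID => //; apply: IM.
have [r_eq0|r_neq0] := classic (z8add x (z8mul q g) = z8zero).
  by exists (z8opp q); rewrite z8mulN; apply: z8add_eq0.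
by move: (g_min _ (conj Ir r_neq0)); rewrite -lez_nat !gez0_abs ?z8norm_ge0 // leNgt lt_g.
Qed.

(* [z8fund = 1 + zeta8 - zeta8 ^+ 3 = 1 + sqrt 2], the fundamental unit *)
Definition z8fund : Z8 := (1, 1, 0, -1).
Definition z8fund_inv : Z8 := (-1, 1, 0, -1).

Lemma z8fund_invK : z8mul z8fund_inv z8fund = z8one.
Proof. by []. Qed.

Lemma z8fundK : z8mul z8fund z8fund_inv = z8one.
Proof. by []. Qed.

Lemma generates_mul_unit {I a u v} :
  z8mul v u = z8one -> generates a I -> generates (z8mul u a) I.
Proof.
move=> vu Ga x; rewrite Ga; split=> [[r ->]|[r ->]].
  by exists (z8mul r v); rewrite -z8mulA (z8mulA v) vu z8mul1.
by exists (z8mul r u); rewrite z8mulA.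
Qed.

Lemma exists_reduced_generator {I a} : generates a I ->
  exists b, generates b I /\ 2 * `|rnorm_sqrt2 b| <= rnorm_re b.
Proof.
move=> Ga; have [b [Gb b_min]] :=
  exists_min_measure (fun b => `|rnorm_re b|%N) (ex_intro (generates^~ I) a Ga).
exists b; split=> //; rewrite leNgt; apply/negP => lt_b.
have b_minZ c : generates c I -> rnorm_re b <= rnorm_re c.
  by move=> /b_min; rewrite -lez_nat !gez0_abs ?rnorm_re_ge0.
have [Q_gt0|Q_le0] := ltrP 0 (rnorm_sqrt2 b).
  have := b_minZ _ (generates_mul_unit z8fundK Gb).
  by rewrite rnorm_reM /=; lia.
have := b_minZ _ (generates_mul_unit z8fund_invK Gb).
by rewrite rnorm_reM /=; lia.
Qed.

Lemma rnorm_re_mul_reduced a r : 2 * `|rnorm_sqrt2 a| <= rnorm_re a -> r <> z8zero ->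
  rnorm_re a <= rnorm_re (z8mul r a).
Proof.
move=> a_red /rnorm_sqrt2_lt Qr_lt; rewrite rnorm_reM.
have := rnorm_re_ge0 a; have := normr_ge0 (rnorm_sqrt2 r); nia.
Qed.

Lemma zeta8_sqr : zeta8 ^+ 2 = 'i.
Proof.
have two_neq0 : (2 : algC) != 0 by rewrite pnatr_eq0.
rewrite /zeta8 expr_div_n sqrtCK.
have -> : (1 + 'i) ^+ 2 = 1 + 'i ^+ 2 + 2 * 'i :> algC by ring.
by rewrite sqrCi addrN add0r mulrAC divff // mul1r.
Qed.

Lemma zeta8_exp4 : zeta8 ^+ 4 = -1.
Proof. by rewrite (exprM _ 2 2) zeta8_sqr sqrCi. Qed.

Lemma conj_zeta8 : zeta8^* = - zeta8 ^+ 3.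
Proof.
have s2_ge0 : 0 <= sqrtC 2 :> algC by rewrite sqrtC_ge0 ler0n.
rewrite exprS zeta8_sqr /zeta8 rmorphM fmorphV /= rmorphD /= rmorph1 conjCi.
rewrite (geC0_conj s2_ge0) mulrAC -mulNr; congr (_ / _).
by rewrite mulrDl mul1r -expr2 sqrCi; ring.
Qed.

Lemma zeta8_expD4 k : zeta8 ^+ (k + 4) = - zeta8 ^+ k.
Proof. by rewrite exprD zeta8_exp4 mulrN1. Qed.

Lemma mul_root8_conj (R : comNzRingType) (t b0 b1 b2 b3 : R) : t ^+ 4 = -1 ->
  (b0 + b1 * t + b2 * t ^+ 2 + b3 * t ^+ 3) * (b0 - b3 * t - b2 * t ^+ 2 - b1 * t ^+ 3)
  = b0 ^+ 2 + b1 ^+ 2 + b2 ^+ 2 + b3 ^+ 2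
    + (b0 * b1 + b1 * b2 + b2 * b3 - b3 * b0) * (t - t ^+ 3).
Proof.
move=> t4.
set c := - (b1 ^+ 2 + b2 ^+ 2 + b3 ^+ 2) - (b1 * b2 + b2 * b3) * t - b1 * b3 * t ^+ 2.
(* the two sides differ by [(t ^+ 4 + 1) * c] *)
by rewrite -[RHS]addr0 -(mul0r c) -(addNr 1) -t4 /c; ring.
Qed.

Lemma normCK_root8 (C : numClosedFieldType) (t : C) (a0 a1 a2 a3 : int) :
  t ^+ 4 = -1 -> t^* = - t ^+ 3 ->
  `|a0%:~R + a1%:~R * t + a2%:~R * t ^+ 2 + a3%:~R * t ^+ 3| ^+ 2
    = (rnorm_re (a0, a1, a2, a3))%:~R + (rnorm_sqrt2 (a0, a1, a2, a3))%:~R * (t - t ^+ 3).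
Proof.
move=> t4 conj_t.
have conj_t2 : (t ^+ 2)^* = - t ^+ 2.
  by rewrite rmorphXn /= conj_t sqrrN -exprM (exprD t 2 4) t4 mulrN1.
have conj_t3 : (t ^+ 3)^* = - t.
  rewrite rmorphXn /= conj_t exprNn -exprM (exprD t 1 8) (exprM t 4 2) t4.
  by rewrite sqrrN expr1n mulr1 expr1 -signr_odd mulN1r.
have conj_scale (a : int) (u : C) : (a%:~R * u)^* = a%:~R * u^*.
  by rewrite rmorphM /= rmorph_int.
have conj_z : (a0%:~R + a1%:~R * t + a2%:~R * t ^+ 2 + a3%:~R * t ^+ 3)^*
    = a0%:~R - a3%:~R * t - a2%:~R * t ^+ 2 - a1%:~R * t ^+ 3 :> C.
  by rewrite !rmorphD /= !conj_scale rmorph_int conj_t conj_t2 conj_t3; ring.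
rewrite normCK conj_z mul_root8_conj //= !rmorphD /= !rmorphN /= !rmorphM /=; ring.
Qed.

Lemma z8emb_normCK k x : odd k ->
  `|z8emb k x| ^+ 2
    = (rnorm_re x)%:~R + (rnorm_sqrt2 x)%:~R * (zeta8 ^+ k - (zeta8 ^+ k) ^+ 3).
Proof.
move=> k_odd; case: x => [[[a0 a1] a2] a3].
rewrite /z8emb !(mulnC _ k) !exprM; apply: normCK_root8.
  by rewrite -exprM mulnC exprM zeta8_exp4 -signr_odd k_odd.
by rewrite rmorphXn /= conj_zeta8 exprNn -signr_odd k_odd mulN1r -!exprM mulnC.
Qed.

Lemma canon_normsqE x : canon_normsq x = 4 * (rnorm_re x)%:~R.
Proof.
rewrite /canon_normsq !big_cons big_nil !z8emb_normCK //.
by rewrite (zeta8_expD4 1) (zeta8_expD4 3); ring.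
Qed.

Lemma ler_canon_norm a g : rnorm_re a <= rnorm_re g -> canon_norm a <= canon_norm g.
Proof.
move=> le_ag; rewrite /canon_norm !canon_normsqE ler_sqrtC ?nnegrE.
- by rewrite ler_pM2l ?ltr0n // ler_int.
- by rewrite mulr_ge0 ?ler0n // ler0z rnorm_re_ge0.
- by rewrite mulr_ge0 ?ler0n // ler0z rnorm_re_ge0.
Qed.

Theorem theorem5 (I : Z8 -> Prop) :
  is_ideal I -> (exists x, I x /\ x <> z8zero) ->
  exists a : Z8, generates a I /\
    (forall g : Z8, I g -> g <> z8zero -> canon_norm a <= canon_norm g).
Proof.
move=> I_ideal I_neq0.
have [g Gg] := ideal_principal I_ideal I_neq0.
have [a [Ga a_reduced]] := exists_reduced_generator Gg.
exists a; split=> // y Iy y_neq0.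
have [r y_ra] := (Ga y).1 Iy.
apply: ler_canon_norm; rewrite y_ra; apply: rnorm_re_mul_reduced => // r_eq0.
by apply: y_neq0; rewrite y_ra r_eq0 z8mul0.
Qed.
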